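(* For every $\rho$-bialgebra $(X,a,c)$ of a higher-order GSOS law $\rho$ of $\Sigma$ over $B$, the underlying $\Sigma$-algebra $(X,a)$ is adequate: if $\llbracket-\rrbracket\colon\mu\Sigma\to X$ is the unique $\Sigma$-algebra morphism from the initial algebra and $\mathsf{beh}\colon\mu\Sigma\to\nu B(\mu\Sigma,-)$ is the unique $B(\mu\Sigma,-)$-coalgebra morphism from $(\mu\Sigma,\gamma)$ to the final $B(\mu\Sigma,-)$-coalgebra, then there exists a morphism $k\colon X\to\nu B(\mu\Sigma,-)$ in $\mathcal{C}$ with $k\cdot\llbracket-\rrbracket=\mathsf{beh}$.
   Context: Let $\mathcal{C}$ be a category with binary products and binary coproducts (pairing $\langle f,g\rangle$, copairing $[f,g]$, codiagonal $\nabla=[\mathrm{id},\mathrm{id}]$). Let $\Sigma\colon\mathcal{C}\to\mathcal{C}$ be an endofunctor with an initial algebra $(\mu\Sigma,\iota)$ and a free $\Sigma$-algebra $(\Sigma^\star X,\iota_X)$ with unit $\eta_X$ on every object $X$; for a $\Sigma$-algebra $(A,a)$ write $\hat a\colon\Sigma^\star A\to A$ for the unique algebra morphism with $\hat a\cdot\eta_A=\mathrm{id}_A$. Let $B\colon\mathcal{C}^{op}\times\mathcal{C}\to\mathcal{C}$ be a bifunctor such that for every object $X$ the endofunctor $B(X,-)$ has a final coalgebra, denoted $\nu B(X,-)$. A higher-order GSOS law is a family $\rho_{X,Y}\colon\Sigma(X\times B(X,Y))\to B(X,\Sigma^\star(X+Y))$ dinatural in $X$ and natural in $Y$. Its operational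 model is the unique $\gamma\colon\mu\Sigma\to B(\mu\Sigma,\mu\Sigma)$ with $\gamma\cdot\iota=B(\mathrm{id},\hat\iota\cdot\Sigma^\star\nabla)\cdot\rho_{\mu\Sigma,\mu\Sigma}\cdot\Sigma\langle\mathrm{id},\gamma\rangle$. A $\rho$-bialgebra is a triple $(X,a,c)$ with $a\colon\Sigma X\to X$, $c\colon X\to B(X,X)$ such that $c\cdot a=B(\mathrm{id},\hat a\cdot\Sigma^\star\nabla)\cdot\rho_{X,X}\cdot\Sigma\langle\mathrm{id},c\rangle$. *)

(* Equality of morphisms is Leibniz equality. *)

Set Implicit Arguments.
Unset Strict Implicit.

Record Category := {
  Obj :> Type;
  Hom : Obj -> Obj -> Type;
  idm : forall X, Hom X X;
  comp : forall X Y Z, Hom Y Z -> Hom X Y -> Hom X Z;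
  comp_id_l : forall X Y (f : Hom X Y), comp (idm Y) f = f;
  comp_id_r : forall X Y (f : Hom X Y), comp f (idm X) = f;
  comp_assoc : forall X Y Z W (h : Hom Z W) (g : Hom Y Z) (f : Hom X Y),
      comp h (comp g f) = comp (comp h g) f
}.

Arguments idm {C} X : rename.
Arguments comp {C X Y Z} g f : rename.
Notation "g ∘ f" := (comp g f) (at level 40, left associativity).

Record BinProducts (C : Category) := {
  prod_obj : C -> C -> C;
  pi1 : forall X Y, Hom (prod_obj X Y) X;
  pi2 : forall X Y, Hom (prod_obj X Y) Y;
  pair : forall Z X Y, Hom Z X -> Hom Z Y -> Hom Z (prod_obj X Y);
  pair_pi1 : forall Z X Y (f : Hom Z X) (g : Hom Z Y), pi1 X Y ∘ pair f g = f;
  pair_pi2 : forall Z X Y (f : Hom Z X) (g : Hom Z Y), pi2 X Y ∘ pair f g = g;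
  pair_uniq : forall Z X Y (f : Hom Z X) (g : Hom Z Y) (h : Hom Z (prod_obj X Y)),
      pi1 X Y ∘ h = f -> pi2 X Y ∘ h = g -> h = pair f g
}.

Record BinCoproducts (C : Category) := {
  coprod_obj : C -> C -> C;
  in1 : forall X Y, Hom X (coprod_obj X Y);
  in2 : forall X Y, Hom Y (coprod_obj X Y);
  copair : forall X Y Z, Hom X Z -> Hom Y Z -> Hom (coprod_obj X Y) Z;
  copair_in1 : forall X Y Z (f : Hom X Z) (g : Hom Y Z), copair f g ∘ in1 X Y = f;
  copair_in2 : forall X Y Z (f : Hom X Z) (g : Hom Y Z), copair f g ∘ in2 X Y = g;
  copair_uniq : forall X Y Z (f : Hom X Z) (g : Hom Y Z) (h : Hom (coprod_obj X Y) Z),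
      h ∘ in1 X Y = f -> h ∘ in2 X Y = g -> h = copair f g
}.

Arguments pair {C} _ {Z X Y} _ _.
Arguments pi1 {C} _ _ _.
Arguments pi2 {C} _ _ _.
Arguments copair {C} _ {X Y Z} _ _.
Arguments in1 {C} _ _ _.
Arguments in2 {C} _ _ _.

Definition prod_map {C : Category} (P : BinProducts C) {X X' Y Y' : C}
  (f : Hom X X') (g : Hom Y Y') : Hom (prod_obj P X Y) (prod_obj P X' Y') :=
  pair P (f ∘ pi1 P X Y) (g ∘ pi2 P X Y).

Definition coprod_map {C : Category} (S : BinCoproducts C) {X X' Y Y' : C}
  (f : Hom X X') (g : Hom Y Y') : Hom (coprod_obj S X Y) (coprod_obj S X' Y') :=
  copair S (in1 S X' Y' ∘ f) (in2 S X' Y' ∘ g).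

Definition codiag {C : Category} (S : BinCoproducts C) (X : C)
  : Hom (coprod_obj S X X) X := copair S (idm X) (idm X).

Record EndoFunctor (C : Category) := {
  fobj :> C -> C;
  fmap : forall X Y, Hom X Y -> Hom (fobj X) (fobj Y);
  fmap_id : forall X, fmap (idm X) = idm (fobj X);
  fmap_comp : forall X Y Z (g : Hom Y Z) (f : Hom X Y),
      fmap (g ∘ f) = fmap g ∘ fmap f
}.
Arguments fmap {C} _ {X Y} _.

(* Bifunctor B : C^op × C -> C *)
Record Bifunctor (C : Category) := {
  bobj :> C -> C -> C;
  bmap : forall X X' Y Y', Hom X' X -> Hom Y Y' -> Hom (bobj X Y) (bobj X' Y');
  bmap_id : forall X Y, bmap (idm X) (idm Y) = idm (bobj X Y);
  bmap_comp : forall X X' X'' Y Y' Y''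
      (f' : Hom X'' X') (f : Hom X' X) (g : Hom Y Y') (g' : Hom Y' Y''),
      bmap (f ∘ f') (g' ∘ g) = bmap f' g' ∘ bmap f g
}.
Arguments bmap {C} _ {X X' Y Y'} _ _.

Definition is_alg_morph {C : Category} (F : EndoFunctor C) {A A' : C}
  (a : Hom (F A) A) (a' : Hom (F A') A') (h : Hom A A') : Prop :=
  h ∘ a = a' ∘ fmap F h.

Arguments is_alg_morph {C} F {A A'} a a' h.

Record InitialAlgebra {C : Category} (F : EndoFunctor C) := {
  mu : C;
  iota : Hom (F mu) mu;
  fold : forall (A : C) (a : Hom (F A) A), Hom mu A;
  fold_morph : forall A (a : Hom (F A) A), is_alg_morph F iota a (fold a);
  fold_uniq : forall A (a : Hom (F A) A) (h : Hom mu A),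
      is_alg_morph F iota a h -> h = fold a
}.

Record FreeAlgebras {C : Category} (F : EndoFunctor C) := {
  free_obj : C -> C;
  free_iota : forall X, Hom (F (free_obj X)) (free_obj X);
  free_eta : forall X, Hom X (free_obj X);
  free_ext : forall X (A : C) (a : Hom (F A) A), Hom X A -> Hom (free_obj X) A;
  free_ext_morph : forall X A (a : Hom (F A) A) (f : Hom X A),
      is_alg_morph F (free_iota X) a (free_ext a f);
  free_ext_eta : forall X A (a : Hom (F A) A) (f : Hom X A),
      free_ext a f ∘ free_eta X = f;
  free_ext_uniq : forall X A (a : Hom (F A) A) (f : Hom X A) (h : Hom (free_obj X) A),
      is_alg_morph F (free_iota X) a h -> h ∘ free_eta X = f -> h = free_ext a f
}.
Arguments free_obj {C F} _ _.
Arguments free_iota {C F} _ _.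
Arguments free_eta {C F} _ _.
Arguments free_ext {C F} _ {X A} _ _.

Definition hat {C : Category} {F : EndoFunctor C} (Fr : FreeAlgebras F)
  {A : C} (a : Hom (F A) A) : Hom (free_obj Fr A) A :=
  free_ext Fr a (idm A).

Definition free_map {C : Category} {F : EndoFunctor C} (Fr : FreeAlgebras F)
  {X Y : C} (f : Hom X Y) : Hom (free_obj Fr X) (free_obj Fr Y) :=
  free_ext Fr (free_iota Fr Y) (free_eta Fr Y ∘ f).

Record FinalCoalgebras {C : Category} (B : Bifunctor C) := {
  nu : C -> C;
  zeta : forall X, Hom (nu X) (B X (nu X));
  unfold : forall X (Y : C) (c : Hom Y (B X Y)), Hom Y (nu X);
  unfold_morph : forall X Y (c : Hom Y (B X Y)),
      zeta X ∘ unfold c = bmap B (idm X) (unfold c) ∘ c;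
  unfold_uniq : forall X Y (c : Hom Y (B X Y)) (h : Hom Y (nu X)),
      zeta X ∘ h = bmap B (idm X) h ∘ c -> h = unfold c
}.
Arguments nu {C B} _ _.
Arguments unfold {C B} _ {X Y} _.

Section GSOS.
Context {C : Category} (P : BinProducts C) (S : BinCoproducts C)
        (Sig : EndoFunctor C) (Fr : FreeAlgebras Sig) (B : Bifunctor C).

Definition rho_type : Type := forall X Y : C,
  Hom (Sig (prod_obj P X (B X Y))) (B X (free_obj Fr (coprod_obj S X Y))).

(* dinatural in X, natural in Y *)
Definition is_ho_gsos_law (rho : rho_type) : Prop :=
  (forall (X X' Y : C) (f : Hom X X'),
     bmap B (idm X) (free_map Fr (coprod_map S f (idm Y))) ∘ rho X Y
       ∘ fmap Sig (prod_map P (idm X) (bmap B f (idm Y)))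
     = bmap B f (idm (free_obj Fr (coprod_obj S X' Y))) ∘ rho X' Y
       ∘ fmap Sig (prod_map P f (idm (B X' Y))))
  /\
  (forall (X Y Y' : C) (g : Hom Y Y'),
     bmap B (idm X) (free_map Fr (coprod_map S (idm X) g)) ∘ rho X Y
     = rho X Y' ∘ fmap Sig (prod_map P (idm X) (bmap B (idm X) g))).

Definition is_operational_model (rho : rho_type) (I : InitialAlgebra Sig)
  (gamma : Hom (mu I) (B (mu I) (mu I))) : Prop :=
  gamma ∘ iota I =
    bmap B (idm (mu I)) (hat Fr (iota I) ∘ free_map Fr (codiag S (mu I)))
    ∘ rho (mu I) (mu I) ∘ fmap Sig (pair P (idm (mu I)) gamma).

Definition is_bialgebra (rho : rho_type) (X : C)
  (a : Hom (Sig X) X) (c : Hom X (B X X)) : Prop :=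
  c ∘ a =
    bmap B (idm X) (hat Fr a ∘ free_map Fr (codiag S X))
    ∘ rho X X ∘ fmap Sig (pair P (idm X) c).

End GSOS.


(* ⟦-⟧ is a coalgebra morphism from (μΣ, γ) to the B(μΣ,-)-coalgebra
   B(⟦-⟧, id) ∘ c on X, so k can be taken to be the unfold of the latter and
   finality gives k ∘ ⟦-⟧ = beh.  That ⟦-⟧ is such a morphism follows from
   uniqueness of primitive recursion over μΣ: B(⟦-⟧, id) ∘ c ∘ ⟦-⟧ (by the
   bialgebra law and dinaturality of ρ) and B(id, ⟦-⟧) ∘ γ (by the equation of
   the operational model and naturality of ρ) both satisfy h ∘ ι = r ∘ Σ⟨id, h⟩
   for r = B(id, â ∘ Σ⋆∇ ∘ Σ⋆(⟦-⟧ + id)) ∘ ρ_{μΣ,X}. *)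

Section ProductsCoproducts.
Context {C : Category}.

Lemma pair_comp (P : BinProducts C) (W Z X Y : C) (f : Hom Z X) (g : Hom Z Y)
  (h : Hom W Z) :
  pair P f g ∘ h = pair P (f ∘ h) (g ∘ h).
Proof.
  apply pair_uniq; rewrite comp_assoc; [rewrite pair_pi1 | rewrite pair_pi2]; reflexivity.
Qed.

Lemma prod_map_pair (P : BinProducts C) (Z X X' Y Y' : C) (f : Hom X X') (g : Hom Y Y')
  (h : Hom Z X) (k : Hom Z Y) :
  prod_map P f g ∘ pair P h k = pair P (f ∘ h) (g ∘ k).
Proof.
  unfold prod_map. rewrite pair_comp, <- !comp_assoc, pair_pi1, pair_pi2. reflexivity.
Qed.

Lemma pair_id_comp (P : BinProducts C) {Z Y Y' : C} (g : Hom Y Y') (h : Hom Z Y) :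
  pair P (idm Z) (g ∘ h) = prod_map P (idm Z) g ∘ pair P (idm Z) h.
Proof. rewrite prod_map_pair, comp_id_l. reflexivity. Qed.

Lemma pair_id_natural (P : BinProducts C) (Z X Y : C) (f : Hom Z X) (c : Hom X Y) :
  pair P (idm X) c ∘ f = prod_map P f (idm Y) ∘ pair P (idm Z) (c ∘ f).
Proof. rewrite pair_comp, prod_map_pair, !comp_id_l, comp_id_r. reflexivity. Qed.

Lemma copair_comp (S : BinCoproducts C) (X Y Z Z' : C) (f : Hom X Z) (g : Hom Y Z)
  (h : Hom Z Z') :
  h ∘ copair S f g = copair S (h ∘ f) (h ∘ g).
Proof.
  apply copair_uniq; rewrite <- comp_assoc; [rewrite copair_in1 | rewrite copair_in2];
    reflexivity.
Qed.

Lemma coprod_map_comp (S : BinCoproducts C) (X X' X'' Y Y' Y'' : C)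
  (f : Hom X X') (f' : Hom X' X'') (g : Hom Y Y') (g' : Hom Y' Y'') :
  coprod_map S f' g' ∘ coprod_map S f g = coprod_map S (f' ∘ f) (g' ∘ g).
Proof.
  unfold coprod_map.
  rewrite copair_comp, !comp_assoc, copair_in1, copair_in2. reflexivity.
Qed.

Lemma codiag_natural (S : BinCoproducts C) (A A' : C) (h : Hom A A') :
  h ∘ codiag S A = codiag S A' ∘ coprod_map S h h.
Proof.
  unfold codiag, coprod_map.
  rewrite !copair_comp, !comp_assoc, copair_in1, copair_in2, !comp_id_l, !comp_id_r.
  reflexivity.
Qed.

End ProductsCoproducts.

Section Algebras.
Context {C : Category} {F : EndoFunctor C}.

Lemma alg_morph_comp (A1 A2 A3 : C) (a1 : Hom (F A1) A1) (a2 : Hom (F A2) A2)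
  (a3 : Hom (F A3) A3) (h : Hom A1 A2) (k : Hom A2 A3) :
  is_alg_morph F a1 a2 h -> is_alg_morph F a2 a3 k -> is_alg_morph F a1 a3 (k ∘ h).
Proof.
  unfold is_alg_morph; intros Hh Hk.
  rewrite <- comp_assoc, Hh, comp_assoc, Hk, fmap_comp, comp_assoc. reflexivity.
Qed.

Definition is_primrec (P : BinProducts C) (I : InitialAlgebra F) {Y : C}
  (r : Hom (F (prod_obj P (mu I) Y)) Y) (h : Hom (mu I) Y) : Prop :=
  h ∘ iota I = r ∘ fmap F (pair P (idm (mu I)) h).

Lemma primrec_uniq (P : BinProducts C) (I : InitialAlgebra F) (Y : C)
  (r : Hom (F (prod_obj P (mu I) Y)) Y) (h1 h2 : Hom (mu I) Y) :
  is_primrec P I r h1 -> is_primrec P I r h2 -> h1 = h2.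
Proof.
  (* ⟨id, h⟩ is the fold of ⟨ι ∘ Fπ₁, r⟩, so h is its second component. *)
  set (alpha := pair P (iota I ∘ fmap F (pi1 P (mu I) Y)) r).
  assert (pair_fold : forall h, is_primrec P I r h -> pair P (idm (mu I)) h = fold I alpha).
  { intros h Hh. apply fold_uniq. unfold is_alg_morph, alpha.
    rewrite !pair_comp, <- comp_assoc, <- fmap_comp, pair_pi1, fmap_id, comp_id_r,
      comp_id_l, Hh.
    reflexivity. }
  intros H1 H2.
  rewrite <- (pair_pi2 P (idm (mu I)) h1), <- (pair_pi2 P (idm (mu I)) h2),
    (pair_fold _ H1), (pair_fold _ H2).
  reflexivity.
Qed.

Section Free.
Variable Fr : FreeAlgebras F.

Lemma free_alg_morph_eq (V A : C) (a : Hom (F A) A) (h1 h2 : Hom (free_obj Fr V) A) :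
  is_alg_morph F (free_iota Fr V) a h1 -> is_alg_morph F (free_iota Fr V) a h2 ->
  h1 ∘ free_eta Fr V = h2 ∘ free_eta Fr V -> h1 = h2.
Proof.
  intros H1 H2 E.
  rewrite (free_ext_uniq H1 E). symmetry. exact (free_ext_uniq H2 eq_refl).
Qed.

Lemma free_map_morph (V W : C) (f : Hom V W) :
  is_alg_morph F (free_iota Fr V) (free_iota Fr W) (free_map Fr f).
Proof. apply free_ext_morph. Qed.

Lemma hat_morph (A : C) (a : Hom (F A) A) : is_alg_morph F (free_iota Fr A) a (hat Fr a).
Proof. apply free_ext_morph. Qed.

Lemma free_map_eta (V W : C) (f : Hom V W) :
  free_map Fr f ∘ free_eta Fr V = free_eta Fr W ∘ f.
Proof. apply free_ext_eta. Qed.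

Lemma hat_eta (A : C) (a : Hom (F A) A) : hat Fr a ∘ free_eta Fr A = idm A.
Proof. apply free_ext_eta. Qed.

Lemma free_map_comp (U V W : C) (f : Hom U V) (g : Hom V W) :
  free_map Fr g ∘ free_map Fr f = free_map Fr (g ∘ f).
Proof.
  apply free_alg_morph_eq with (a := free_iota Fr W).
  - apply alg_morph_comp with (a2 := free_iota Fr V); apply free_map_morph.
  - apply free_map_morph.
  - rewrite <- comp_assoc, !free_map_eta, comp_assoc, free_map_eta, comp_assoc.
    reflexivity.
Qed.

Lemma hat_natural {A A' : C} {a : Hom (F A) A} {a' : Hom (F A') A'} {h : Hom A A'} :
  is_alg_morph F a a' h -> h ∘ hat Fr a = hat Fr a' ∘ free_map Fr h.
Proof.
  intros Hh. apply free_alg_morph_eq with (a := a').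
  - apply alg_morph_comp with (a2 := a); [apply hat_morph | exact Hh].
  - apply alg_morph_comp with (a2 := free_iota Fr A');
      [apply free_map_morph | apply hat_morph].
  - rewrite <- !comp_assoc, hat_eta, free_map_eta, comp_assoc, hat_eta, comp_id_l,
      comp_id_r.
    reflexivity.
Qed.

Lemma hat_codiag_natural (S : BinCoproducts C) {A A' : C} {a : Hom (F A) A}
  {a' : Hom (F A') A'} {h : Hom A A'} :
  is_alg_morph F a a' h ->
  h ∘ (hat Fr a ∘ free_map Fr (codiag S A))
  = hat Fr a' ∘ free_map Fr (codiag S A') ∘ free_map Fr (coprod_map S h h).
Proof.
  intros Hh.
  rewrite comp_assoc, (hat_natural Hh), <- !comp_assoc, !free_map_comp,
    codiag_natural.
  reflexivity.
Qed.

End Free.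
End Algebras.

Section Coalgebras.
Context {C : Category} (B : Bifunctor C).

Lemma bmap_id_comp (X Y Y' Y'' : C) (g : Hom Y Y') (g' : Hom Y' Y'') :
  bmap B (idm X) g' ∘ bmap B (idm X) g = bmap B (idm X) (g' ∘ g).
Proof. rewrite <- bmap_comp, comp_id_l. reflexivity. Qed.

Lemma bmap_fst_snd (X X' Y Y' : C) (f : Hom X' X) (g : Hom Y Y') :
  bmap B f (idm Y') ∘ bmap B (idm X) g = bmap B f g.
Proof. rewrite <- bmap_comp, !comp_id_l. reflexivity. Qed.

Lemma bmap_snd_fst (X X' Y Y' : C) (f : Hom X' X) (g : Hom Y Y') :
  bmap B (idm X') g ∘ bmap B f (idm Y) = bmap B f g.
Proof. rewrite <- bmap_comp, !comp_id_r. reflexivity. Qed.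

Lemma unfold_coalg_morph (N : FinalCoalgebras B) (X Y Y' : C) (c : Hom Y (B X Y))
  (c' : Hom Y' (B X Y')) (h : Hom Y Y') :
  c' ∘ h = bmap B (idm X) h ∘ c -> unfold N c' ∘ h = unfold N c.
Proof.
  intros Hh. apply unfold_uniq.
  rewrite comp_assoc, unfold_morph, <- comp_assoc, Hh, comp_assoc, bmap_id_comp.
  reflexivity.
Qed.

End Coalgebras.

Section Adequacy.
Context {C : Category} (P : BinProducts C) (S : BinCoproducts C)
  (Sig : EndoFunctor C) (I : InitialAlgebra Sig) (Fr : FreeAlgebras Sig) (B : Bifunctor C)
  (rho : rho_type P S Fr B) (X : C) (a : Hom (Sig X) X) (c : Hom X (B X X)).

Local Notation sem := (fold I a).
Local Notation eval_X := (hat Fr a ∘ free_map Fr (codiag S X)).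

Definition interp_step : Hom (Sig (prod_obj P (mu I) (B (mu I) X))) (B (mu I) X) :=
  bmap B (idm (mu I)) (eval_X ∘ free_map Fr (coprod_map S sem (idm X))) ∘ rho (mu I) X.

Lemma bialg_primrec :
  is_ho_gsos_law rho -> is_bialgebra rho a c ->
  is_primrec P I interp_step (bmap B sem (idm X) ∘ c ∘ sem).
Proof.
  intros [Hdin _] Hbi.
  unfold is_primrec, interp_step.
  rewrite <- comp_assoc, (fold_morph I a), comp_assoc, <- (comp_assoc _ c a), Hbi.
  transitivity (bmap B (idm (mu I)) eval_X
    ∘ (bmap B sem (idm _) ∘ rho X X ∘ fmap Sig (prod_map P sem (idm (B X X))))
    ∘ fmap Sig (pair P (idm (mu I)) (c ∘ sem))).
  - rewrite <- !comp_assoc, <- !fmap_comp, pair_id_natural, !comp_assoc, bmap_fst_snd,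
      bmap_snd_fst.
    reflexivity.
  - rewrite <- Hdin, !comp_assoc, bmap_id_comp, <- (comp_assoc _ c sem),
      (pair_id_comp P (bmap B sem (idm X))), fmap_comp, !comp_assoc.
    reflexivity.
Qed.

Lemma model_primrec (gamma : Hom (mu I) (B (mu I) (mu I))) :
  is_ho_gsos_law rho -> is_operational_model rho gamma ->
  is_primrec P I interp_step (bmap B (idm (mu I)) sem ∘ gamma).
Proof.
  intros [_ Hnat] Hgamma.
  unfold is_primrec, interp_step.
  assert (sem_eval : sem ∘ (hat Fr (iota I) ∘ free_map Fr (codiag S (mu I)))
      = eval_X ∘ free_map Fr (coprod_map S sem (idm X))
        ∘ free_map Fr (coprod_map S (idm (mu I)) sem)).
  { rewrite (hat_codiag_natural Fr S (fold_morph I a)), <- !comp_assoc, !free_map_comp,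
      coprod_map_comp, comp_id_l, comp_id_r.
    reflexivity. }
  transitivity (bmap B (idm (mu I)) (eval_X ∘ free_map Fr (coprod_map S sem (idm X)))
    ∘ (bmap B (idm (mu I)) (free_map Fr (coprod_map S (idm (mu I)) sem))
       ∘ rho (mu I) (mu I))
    ∘ fmap Sig (pair P (idm (mu I)) gamma)).
  - rewrite <- comp_assoc, Hgamma, !comp_assoc, !bmap_id_comp, sem_eval. reflexivity.
  - rewrite Hnat, pair_id_comp, fmap_comp, !comp_assoc. reflexivity.
Qed.

Lemma fold_coalg_morph (gamma : Hom (mu I) (B (mu I) (mu I))) :
  is_ho_gsos_law rho -> is_operational_model rho gamma -> is_bialgebra rho a c ->
  bmap B sem (idm X) ∘ c ∘ sem = bmap B (idm (mu I)) sem ∘ gamma.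
Proof.
  intros Hrho Hgamma Hbi.
  apply primrec_uniq with (r := interp_step);
    [apply bialg_primrec | apply model_primrec]; assumption.
Qed.

End Adequacy.

Theorem theorem3p11
  (C : Category) (P : BinProducts C) (S : BinCoproducts C)
  (Sig : EndoFunctor C) (I : InitialAlgebra Sig) (Fr : FreeAlgebras Sig)
  (B : Bifunctor C) (N : FinalCoalgebras B)
  (rho : rho_type P S Fr B) (Hrho : is_ho_gsos_law rho)
  (gamma : Hom (mu I) (B (mu I) (mu I)))
  (Hgamma : is_operational_model rho gamma)
  (X : C) (a : Hom (Sig X) X) (c : Hom X (B X X))
  (Hbi : is_bialgebra rho a c) :
  exists k : Hom X (nu N (mu I)), k ∘ fold I a = unfold N gamma.
Proof.
  exists (unfold N (bmap B (fold I a) (idm X) ∘ c)).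
  apply unfold_coalg_morph; eapply fold_coalg_morph; eassumption.
Qed.
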